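(* Let $G$ be a finite group with $|G|\ge 3$. (1) For every subset $G_0\subset G$, the inclusion $\mathcal B(G_0)\subset\mathcal F(G_0)$ is cofinal and $\mathcal B(G_0)$ is a C-monoid. (2) $\mathsf v_g(\mathcal B(G))=\mathbb N_0$ for all $g\in G$; the embedding $\widehat{\mathcal B(G)}\hookrightarrow\mathcal F(G)$ is a divisor theory, and the map $\Phi:\mathsf q(\mathcal F(G))/\mathsf q(\mathcal B(G))\to G/G'$, $S\,\mathsf q(\mathcal B(G))\mapsto gG'$ for $S\in\mathcal F(G)$ and $g\in\pi(S)$, is a well-defined group isomorphism; here $\mathsf q(\mathcal F(G))/\mathsf q(\mathcal B(G))$ is the class group of the Krull monoid $\widehat{\mathcal B(G)}$. (3) There is a semigroup epimorphism from the class semigroup $\mathcal C(\mathcal B(G),\mathcal F(G))$ onto $G/G'$.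
   Context: Let $G$ be a finite group written multiplicatively with identity $1_G$, and $G'$ its commutator subgroup. For $G_0\subset G$, $\mathcal F(G_0)$ is the free abelian monoid with basis $G_0$ (sequences $S=g_1\boldsymbol{\cdot}\ldots\boldsymbol{\cdot}g_\ell$, operation $\boldsymbol{\cdot}$), $\mathsf v_g(S)$ is the multiplicity of $g$ in $S$, $\pi(S)=\{g_{\tau(1)}\cdots g_{\tau(\ell)}:\tau\text{ a permutation}\}$ ($\pi$ of the empty sequence is $\{1_G\}$), and $\mathcal B(G_0)=\{S\in\mathcal F(G_0):1_G\in\pi(S)\}$. For a monoid $H$, $\mathsf q(H)$ is its quotient group and $\widehat H=\{x\in\mathsf q(H):\exists c\in H\ \forall n\in\mathbb N:\ cx^n\in H\}$ its complete integral closure. A submonoid $H\subset F$ is cofinal if every $\alpha\in F$ divides some element of $H$ in $F$. A homomorphism $\varphi:H\to D$ is a divisor theory if $D$ is free abelian, $\varphi(a)\mid\varphi(b)$ implies $a\mid b$, and every $\alpha\in D$ is the gcd of finitely many elements of $\varphi(H)$. For a submonoid $H$ of a monoid $F$, $y,y'\in F$ are $H$-equivalent if $y^{-1}H\cap F=y'^{-1}H\cap F$; this is a congruence, the set of classes $\mathcal C(H,F)$ is the class semigroup, and $\mathcal C^*(H,F)$ is the subsemigroup of classes of elements of $(F\setminus F^\times)\cup\{1\}$. $H$ is a C-monoid if it is a submonoid of a factorial monoid $F$ with $H\cap F^\times=H^\times$ and $\mathcal C^*(H,F)$ finite. *)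

From mathcomp Require Import all_boot all_order all_algebra all_fingroup all_solvable.
Set Implicit Arguments.
Unset Strict Implicit.
Unset Printing Implicit Defensive.
Import GRing.Theory Num.Theory.

(* Generic commutative-monoid notions, written additively inside an          *)
(* nmodType M; a (sub)monoid is given by a predicate P : M -> Prop.          *)
Section MonoidNotions.
Variable M : nmodType.
Local Open Scope ring_scope.

Definition submonoid (P : M -> Prop) : Prop :=
  P 0 /\ (forall a b, P a -> P b -> P (a + b)).

Definition unit_in (P : M -> Prop) (x : M) : Prop :=
  P x /\ exists y, P y /\ x + y = 0.

Definition dvd_in (P : M -> Prop) (a b : M) : Prop :=
  exists c, P c /\ b = a + c.

Definition cancellative_in (P : M -> Prop) : Prop :=
  forall a b c, P a -> P b -> P c -> a + b = a + c -> b = c.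

Definition prime_in (P : M -> Prop) (p : M) : Prop :=
  P p /\ ~ unit_in P p /\
  (forall a b, P a -> P b -> dvd_in P p (a + b) -> dvd_in P p a \/ dvd_in P p b).

Definition factorial_in (P : M -> Prop) : Prop :=
  submonoid P /\ cancellative_in P /\
  forall a, P a -> ~ unit_in P a ->
    exists s : seq M, (forall p, p \in s -> prime_in P p) /\ a = \sum_(p <- s) p.

(* y, y' in F are H-equivalent : y^{-1}H \cap F = y'^{-1}H \cap F *)
Definition H_equiv (H F : M -> Prop) (y y' : M) : Prop :=
  forall x, F x -> (H (y + x) <-> H (y' + x)).

(* elements of (F \ F^x) \cup {1} *)
Definition star_elt (F : M -> Prop) (y : M) : Prop :=
  F y /\ (~ unit_in F y \/ y = 0).

(* C^*(H,F) is finite: finitely many H-equivalence classes of elements of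
   (F \ F^x) \cup {1} *)
Definition Cstar_finite (H F : M -> Prop) : Prop :=
  exists L : seq M, (forall l, l \in L -> star_elt F l) /\
    forall y, star_elt F y -> exists l, l \in L /\ H_equiv H F y l.

End MonoidNotions.

(* H (a submonoid of an ambient monoid M0) is a C-monoid: it is (isomorphic,
   via an injective monoid homomorphism iota, to) a submonoid of a factorial
   monoid F with H \cap F^x = H^x and C^*(H,F) finite. *)
Definition C_monoid (M0 : nmodType) (H : M0 -> Prop) : Prop :=
  exists (M : nmodType) (F : M -> Prop) (iota : M0 -> M),
    submonoid H /\ factorial_in F /\
    (forall h, H h -> F (iota h)) /\
    (forall h h', H h -> H h' -> iota h = iota h' -> h = h') /\
    iota 0%R = 0%R /\
    (forall h h', H h -> H h' -> iota (h + h')%R = (iota h + iota h')%R) /\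
    let H' := fun y => exists h, H h /\ y = iota h in
    (forall x, (H' x /\ unit_in F x) <-> unit_in H' x) /\
    Cstar_finite H' F.

Section GroupNotions.
Variable M : zmodType.
Local Open Scope ring_scope.

Definition qgrp (H : M -> Prop) (x : M) : Prop :=
  exists a b, H a /\ H b /\ x = a - b.

Definition cic (H : M -> Prop) (x : M) : Prop :=
  qgrp H x /\ exists c, H c /\ forall n : nat, H (c + x *+ n).

Definition is_gcd_in (D : M -> Prop) (a : M) (s : seq M) : Prop :=
  D a /\ (forall x, x \in s -> dvd_in D a x) /\
  (forall b, D b -> (forall x, x \in s -> dvd_in D b x) -> dvd_in D b a).

Definition incl_divisor_theory (H D : M -> Prop) : Prop :=
  (forall a, H a -> D a) /\
  (forall a b, H a -> H b -> dvd_in D a b -> dvd_in H a b) /\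
  (forall al, D al -> exists s : seq M,
       s != [::] /\ (forall x, x \in s -> H x) /\ is_gcd_in D al s).
End GroupNotions.

(* Sequences over a finite group gT.  The free abelian monoid F(G) is        *)
(* realised as the nonnegative elements of Z^G = {ffun gT -> int}; its       *)
(* quotient group is Z^G.  S g is the multiplicity v_g(S).                   *)
Section Sequences.
Variable gT : finGroupType.

Definition seqZ := {ffun gT -> int}.

Definition inF (G0 : {set gT}) (S : seqZ) : Prop :=
  forall g, (0 <= S g)%R /\ (S g != 0%R -> g \in G0).

Definition terms (S : seqZ) : seq gT :=
  flatten [seq nseq (absz (S g)) g | g <- enum gT].

Definition pi_set (S : seqZ) : {set gT} :=
  [set x | x \in [seq foldr (fun a b => (a * b)%g) 1%g t
                   | t <- permutations (terms S)]].

Definition inB (G0 : {set gT}) (S : seqZ) : Prop :=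
  inF G0 S /\ (1%g \in pi_set S).

Definition derivedT : {group gT} := [~: [set: gT], [set: gT]]%G.
End Sequences.

From mathcomp Require Import all_boot all_order all_algebra all_fingroup all_solvable.
From mathcomp Require Import zify.
Set Implicit Arguments. Unset Strict Implicit. Unset Printing Implicit Defensive.
Import GRing.Theory Num.Theory Order.TTheory.

(* Write N = |G|.  Every S in F(G_0) has S^N in B(G_0), which gives cofinality.
   If g occurs more than N(N-1) times in a product-one ordering of S, then N of
   these occurrences follow the same partial product v; deleting them changes
   the total product by (v g^-1 v^-1)^N = 1.  Hence S and S g^-N are
   B(G_0)-equivalent as soon as v_g(S) >= N^2, and every class of the class
   semigroup has a representative with all multiplicities at most N^2.
   For G_0 = G, let Phi map x in Z^G to the product of the g^(x g) in G/G'.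
   There is a product-one sequence U of which every element of G' is an ordered
   product, so S + U lies in B(G) whenever S >= 0 and Phi S = 1.  Therefore the
   kernel of Phi is q(B(G)) and the complete integral closure of B(G) is
   {S >= 0 | Phi S = 1}, from which the divisor theory and the class group G/G'
   follow. *)

Section FfunPointwise.
Variable aT : finType.
Local Open Scope ring_scope.

Lemma ffun0E (rT : nmodType) x : (0 : {ffun aT -> rT}) x = 0.
Proof. by rewrite ffunE. Qed.

Lemma ffunDE (rT : nmodType) (f h : {ffun aT -> rT}) x : (f + h) x = f x + h x.
Proof. by rewrite ffunE. Qed.

Lemma ffunBE (rT : zmodType) (f h : {ffun aT -> rT}) x : (f - h) x = f x - h x.
Proof. by rewrite !ffunE. Qed.

End FfunPointwise.

Section Sequences.
Variable gT : finGroupType.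
Implicit Types (S T : seqZ gT) (s t : seq gT).
Local Open Scope ring_scope.

Definition seqZ_of t : seqZ gT := [ffun x => (count_mem x t)%:Z].

Definition seqZ1 (g : gT) := seqZ_of [:: g].

Lemma seqZ_ofE t x : seqZ_of t x = (count_mem x t)%:Z.
Proof. by rewrite ffunE. Qed.

Lemma seqZ_of_ge0 t x : 0 <= seqZ_of t x.
Proof. by rewrite seqZ_ofE. Qed.

Lemma seqZ1E g x : seqZ1 g x = (g == x)%:Z.
Proof. by rewrite seqZ_ofE /= addn0. Qed.

Lemma seqZ_of_nil : seqZ_of [::] = 0.
Proof. by apply/ffunP => x; rewrite !ffunE. Qed.

Lemma seqZ_of_cat s t : seqZ_of (s ++ t) = seqZ_of s + seqZ_of t.
Proof. by apply/ffunP => x; rewrite !ffunE count_cat PoszD. Qed.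

Lemma seqZ_of_cons x t : seqZ_of (x :: t) = seqZ1 x + seqZ_of t.
Proof. by rewrite -cat1s seqZ_of_cat. Qed.

Lemma seqZ_of_nseq n g : seqZ_of (nseq n g) = seqZ1 g *+ n.
Proof.
elim: n => [|n IHn]; first by rewrite seqZ_of_nil.
by rewrite /= seqZ_of_cons IHn mulrS.
Qed.

Lemma sum_seqZ1 t : \sum_(x <- t) seqZ1 x = seqZ_of t.
Proof.
elim: t => [|x t IHt]; first by rewrite big_nil seqZ_of_nil.
by rewrite big_cons IHt seqZ_of_cons.
Qed.

Lemma perm_seqZ_of s t : perm_eq s t = (seqZ_of s == seqZ_of t).
Proof.
apply/idP/eqP => [/seq.permP eq_st | /ffunP eq_st].
  by apply/ffunP => x; rewrite !seqZ_ofE eq_st.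
by apply/allP => x _; apply/eqP; have := eq_st x; rewrite !seqZ_ofE => -[].
Qed.

Lemma count_terms S x : count_mem x (terms S) = `|S x|%N.
Proof.
rewrite /terms count_flatten sumnE !big_map -enumT.
rewrite (bigD1_seq x) ?mem_enum ?enum_uniq //= count_nseq /= eqxx mul1n.
by rewrite big1 ?addn0 // => g /negbTE; rewrite count_nseq /= => ->.
Qed.

Lemma mem_terms S x : (x \in terms S) = (S x != 0).
Proof. by rewrite -has_pred1 has_count count_terms absz_gt0. Qed.

Lemma seqZ_of_terms S : (forall g, 0 <= S g) -> seqZ_of (terms S) = S.
Proof. by move=> S_ge0; apply/ffunP => x; rewrite seqZ_ofE count_terms gez0_abs. Qed.

Lemma foldr_mulgE t : foldr (fun a b => a * b)%g 1%g t = (\prod_(x <- t) x)%g.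
Proof. by elim: t => [|x t IHt]; rewrite ?big_nil ?big_cons //= IHt. Qed.

Lemma pi_setP S x : (forall g, 0 <= S g) ->
  reflect (exists2 t, seqZ_of t = S & (\prod_(y <- t) y)%g = x) (x \in pi_set S).
Proof.
move=> S_ge0; rewrite inE; apply: (iffP mapP) => [[t] | [t <- <-]].
  rewrite mem_permutations perm_seqZ_of seqZ_of_terms // => /eqP St ->.
  by exists t; rewrite ?foldr_mulgE.
exists t; last by rewrite foldr_mulgE.
by rewrite mem_permutations perm_seqZ_of seqZ_of_terms ?eqxx //; apply: seqZ_of_ge0.
Qed.

Lemma mem_pi_set t : (\prod_(x <- t) x)%g \in pi_set (seqZ_of t).
Proof. by apply/pi_setP; [apply: seqZ_of_ge0 | exists t]. Qed.

Lemma mem_pi_set0 : 1%g \in pi_set (0 : seqZ gT).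
Proof. by have := mem_pi_set [::]; rewrite big_nil seqZ_of_nil. Qed.

Lemma exists_mem_pi_set S : (forall g, 0 <= S g) -> exists x, x \in pi_set S.
Proof.
move=> S_ge0; exists (\prod_(x <- terms S) x)%g.
by rewrite -{2}(seqZ_of_terms S_ge0) mem_pi_set.
Qed.

Lemma mem_pi_setD S T a b : (forall g, 0 <= S g) -> (forall g, 0 <= T g) ->
  a \in pi_set S -> b \in pi_set T -> (a * b)%g \in pi_set (S + T).
Proof.
move=> S_ge0 T_ge0 /(pi_setP _ S_ge0) [s <- <-] /(pi_setP _ T_ge0) [t <- <-].
by rewrite -big_cat -seqZ_of_cat mem_pi_set.
Qed.

End Sequences.

Section FreeMonoid.
Variables (gT : finGroupType) (G0 : {set gT}).
Implicit Types (S T : seqZ gT) (t : seq gT).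
Local Open Scope ring_scope.
Local Notation N := #|[set: gT]|.

Lemma inF_ge0 S : inF G0 S -> forall g, 0 <= S g.
Proof. by move=> FS g; case: (FS g). Qed.

Lemma inF0 : inF G0 0.
Proof. by move=> g; rewrite ffun0E eqxx. Qed.

Lemma inFD S T : inF G0 S -> inF G0 T -> inF G0 (S + T).
Proof.
move=> FS FT g; rewrite ffunDE; have [S_ge0 SG0] := FS g; have [T_ge0 TG0] := FT g.
split; first exact: addr_ge0.
by have [Sg0|/SG0 //] := eqVneq (S g) 0; rewrite Sg0 add0r.
Qed.

Lemma inFMn S n : inF G0 S -> inF G0 (S *+ n).
Proof.
by move=> FS; elim: n => [|n IHn]; [rewrite mulr0n; apply: inF0 | rewrite mulrS; apply: inFD].
Qed.

Lemma inF_le S T : inF G0 T -> (forall g, 0 <= S g <= T g) -> inF G0 S.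
Proof.
move=> FT le_ST g; have /andP [S_ge0 le_STg] := le_ST g; split=> // Sg_neq0.
by apply: (FT g).2; apply: contra_neq Sg_neq0 => Tg0; lia.
Qed.

Lemma inF_seqZ1 g : g \in G0 -> inF G0 (seqZ1 g).
Proof. by move=> G0g x; rewrite seqZ1E; split=> //; case: (g =P x) => [<-|]. Qed.

Lemma inF_unit_eq0 S : unit_in (inF G0) S -> S = 0.
Proof.
move=> [FS [T [FT /ffunP ST0]]]; apply/ffunP => g; have /eqP := ST0 g.
by rewrite ffunDE ffun0E paddr_eq0 ?(inF_ge0 FS) ?(inF_ge0 FT) // => /andP [/eqP].
Qed.

Lemma inB_seqZ_of t : inF G0 (seqZ_of t) -> (\prod_(x <- t) x)%g = 1%g -> inB G0 (seqZ_of t).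
Proof. by move=> Ft t1; split; rewrite // -t1 mem_pi_set. Qed.

Lemma inB_prod1 S : inB G0 S -> exists2 t, seqZ_of t = S & (\prod_(x <- t) x)%g = 1%g.
Proof. by move=> [FS /pi_setP]; apply; apply: inF_ge0. Qed.

Lemma inB0 : inB G0 0.
Proof. by split; [apply: inF0 | apply: mem_pi_set0]. Qed.

Lemma inBD S T : inB G0 S -> inB G0 T -> inB G0 (S + T).
Proof.
move=> [FS piS] [FT piT]; split; first exact: inFD.
by rewrite -(mulg1 1%g) (mem_pi_setD (inF_ge0 FS) (inF_ge0 FT)).
Qed.

Lemma submonoid_inB : submonoid (inB G0).
Proof. by split; [apply: inB0 | apply: inBD]. Qed.

Lemma mem_pi_setMn S x n : (forall g, 0 <= S g) ->
  x \in pi_set S -> (x ^+ n)%g \in pi_set (S *+ n).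
Proof.
move=> S_ge0 piSx; elim: n => [|n IHn]; first by rewrite mulr0n mem_pi_set0.
by rewrite mulrS expgS mem_pi_setD // => g; rewrite ffunMnE mulrn_wge0.
Qed.

Lemma inB_mulrn_card S : inF G0 S -> inB G0 (S *+ N).
Proof.
move=> FS; split; first exact: inFMn.
have [x piSx] := exists_mem_pi_set (inF_ge0 FS).
by rewrite -(expg_cardG (in_setT x)) (mem_pi_setMn _ (inF_ge0 FS)).
Qed.

Lemma inB_cofinal S : inF G0 S -> exists T, inB G0 T /\ dvd_in (inF G0) S T.
Proof.
move=> FS; exists (S *+ N); split; first exact: inB_mulrn_card.
by exists (S *+ N.-1); split; [apply: inFMn | rewrite -mulrS prednK ?cardG_gt0].
Qed.

End FreeMonoid.

Lemma C_monoid_of_sub (M : nmodType) (H F : M -> Prop) :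
  submonoid H -> factorial_in F -> (forall h, H h -> F h) ->
  (forall x, H x /\ unit_in F x <-> unit_in H x) -> Cstar_finite H F -> C_monoid H.
Proof.
move=> subH factF HF unitHF [L [L_star L_cover]].
have H'E x : (exists h, H h /\ x = h) <-> H x by split=> [[h [Hh ->]] | Hx]; [| exists x].
exists M, F, id; do 2![split=> //]; split=> //; split; first by move=> h h' _ _.
do 2![split=> //]; cbv zeta; split=> [x | ].
  rewrite H'E unitHF; split=> [[Hx [y [Hy xy0]]] | [H'x [y [H'y xy0]]]].
    by split; [apply/H'E | exists y; split=> //; apply/H'E].
  by split; [apply/H'E | exists y; split=> //; apply/H'E].
exists L; split=> // y /L_cover [l [Ll equiv_yl]].
by exists l; split=> // x Fx; rewrite !H'E; apply: equiv_yl.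
Qed.

Section Factorial.
Variables (gT : finGroupType) (G0 : {set gT}).
Implicit Types (S T : seqZ gT).
Local Open Scope ring_scope.

Lemma dvd_seqZ1P S x : inF G0 S -> dvd_in (inF G0) (seqZ1 x) S <-> 1 <= S x.
Proof.
move=> FS; split => [[T [FT ->]] | Sx_ge1].
  by rewrite ffunDE seqZ1E eqxx lerDl (inF_ge0 FT).
exists (S - seqZ1 x); split; last by rewrite addrC subrK.
refine (inF_le FS _) => g; rewrite ffunBE seqZ1E gerBl andbT.
by have [<-|_] := eqVneq x g; rewrite subr_ge0 //; apply: inF_ge0 FS g.
Qed.

Lemma prime_seqZ1 x : x \in G0 -> prime_in (inF G0) (seqZ1 x).
Proof.
move=> G0x; split; first exact: inF_seqZ1.
split; first by move/inF_unit_eq0/ffunP/(_ x); rewrite seqZ1E eqxx ffun0E.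
move=> S T FS FT /(dvd_seqZ1P x (inFD FS FT)); rewrite ffunDE => STx_ge1.
rewrite (dvd_seqZ1P x FS) (dvd_seqZ1P x FT).
have [|Sx_lt1] := leP 1 (S x); [by left | right].
by move: (S x : int) (T x : int) (inF_ge0 FS x) Sx_lt1 STx_ge1; lia.
Qed.

Lemma factorial_inF : factorial_in (inF G0).
Proof.
split; first by split; [apply: inF0 | apply: inFD].
split; first by move=> S T U _ _ _; apply: addrI.
move=> S FS _; exists [seq seqZ1 x | x <- terms S]; split.
  by move=> _ /mapP [x Sx ->]; apply/prime_seqZ1/(FS x).2; rewrite -mem_terms.
by rewrite big_map sum_seqZ1 seqZ_of_terms //; apply: inF_ge0 FS.
Qed.

End Factorial.

Section Deletion.
Variable gT : finGroupType.
Implicit Types (g v p : gT) (t : seq gT).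
Local Notation N := #|[set: gT]|.
Local Open Scope group_scope.

Fixpoint count_at_prefix g v p t : nat :=
  if t is x :: t' then (((x == g) && (p == v)) + count_at_prefix g v (p * x) t')%N
  else 0.

(* Deleting an occurrence of [g] preceded by the partial product [v] multiplies
   the total product on the left by [v g^-1 v^-1], whichever occurrences were
   deleted before. *)
Lemma delete_at_prefix g v t p d : (d <= count_at_prefix g v p t)%N ->
  exists2 t', perm_eq t (t' ++ nseq d g) &
    p * \prod_(x <- t') x = (v * g^-1 * v^-1) ^+ d * (p * \prod_(x <- t) x).
Proof.
elim: t p d => [|x t IHt] p [|d] //=; rewrite ?big_cons.
- by exists [::]; rewrite ?expg0 ?mul1g.
- by exists (x :: t); rewrite ?cats0 ?big_cons ?expg0 ?mul1g.
have [/andP [/eqP-> /eqP->] | g_v] := boolP ((x == g) && (p == v)).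
  rewrite add1n ltnS => /IHt [t' perm_t prod_t']; exists t'.
    by rewrite /= perm_sym -[g :: nseq d g]cat1s perm_catCA /= perm_cons perm_sym.
  have -> : v * \prod_(x <- t') x = v * g^-1 * v^-1 * (v * g * \prod_(x <- t') x).
    by rewrite !mulgA !mulgKV.
  by rewrite prod_t' expgS !mulgA.
rewrite add0n => /IHt [t' perm_t prod_t']; exists (x :: t').
  by rewrite /= perm_cons.
by rewrite big_cons !mulgA prod_t' !mulgA.
Qed.

Lemma sum_count_at_prefix g t p : (\sum_v count_at_prefix g v p t)%N = count_mem g t.
Proof.
elim: t p => [|x t IHt] p /=; first by rewrite big1.
rewrite big_split /= IHt (bigD1 p) //= eqxx andbT big1 ?addn0 // => v.
by rewrite eq_sym => /negbTE ->; rewrite andbF.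
Qed.

Lemma exists_count_at_prefix g t : (N * N.-1 < count_mem g t)%N ->
  exists v, (N <= count_at_prefix g v 1 t)%N.
Proof.
move=> lt_count; apply/existsP; apply: contraLR lt_count.
rewrite negb_exists -leqNgt -(sum_count_at_prefix g t 1) => /forallP small.
apply: (@leq_trans (\sum_(v : gT) N.-1)); last by rewrite sum_nat_const cardsT.
by apply: leq_sum => v _; rewrite -ltnS prednK ?cardG_gt0 // ltnNge small.
Qed.

End Deletion.

Section ClassFiniteness.
Variables (gT : finGroupType) (G0 : {set gT}).
Implicit Types (S T y : seqZ gT).
Local Open Scope ring_scope.
Local Notation N := #|[set: gT]|.
Local Notation B := (inB G0).
Local Notation F := (inF G0).

Lemma inB_subn_card S g : B S -> (N * N.-1)%:Z < S g -> B (S - seqZ1 g *+ N).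
Proof.
move=> BS lt_Sg; have [t St t1] := inB_prod1 BS.
have [v le_N] : exists v, (N <= count_at_prefix g v 1 t)%N.
  by apply: exists_count_at_prefix; rewrite -ltz_nat -seqZ_ofE St.
have [t' perm_t] := delete_at_prefix le_N.
rewrite !mul1g t1 mulg1 expg_cardG ?inE // => t'1.
have St' : seqZ_of t' = S - seqZ1 g *+ N.
  by move: perm_t; rewrite perm_seqZ_of St seqZ_of_cat seqZ_of_nseq => /eqP->; rewrite addrK.
rewrite -St'; apply: inB_seqZ_of t'1; rewrite St'.
refine (inF_le BS.1 _) => x; rewrite -St' seqZ_of_ge0 St' ffunBE gerBl.
by rewrite ffunMnE mulrn_wge0 // seqZ1E.
Qed.

Lemma H_equiv_subn_card y g : F y -> (N * N)%:Z <= y g ->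
  H_equiv B F y (y - seqZ1 g *+ N).
Proof.
move=> Fy le_yg x Fx; have N_gt0 : (0 < N)%N := cardG_gt0 [set: gT].
have G0g : g \in G0.
  by apply/(Fy g).2/lt0r_neq0; rewrite (lt_le_trans _ le_yg) // ltz_nat muln_gt0 N_gt0.
have -> : y - seqZ1 g *+ N + x = y + x - seqZ1 g *+ N by rewrite addrAC.
split => [Byx | Byx'].
  apply: inB_subn_card Byx _; rewrite ffunDE.
  have le_yx : y g <= y g + x g by rewrite lerDl (inF_ge0 Fx).
  by rewrite (lt_le_trans _ (le_trans le_yg le_yx)) // ltz_nat ltn_pmul2l // ltn_predL.
by rewrite -(subrK (seqZ1 g *+ N) (y + x)); apply: inBD Byx' (inB_mulrn_card (inF_seqZ1 G0g)).
Qed.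

Lemma H_equiv_reduced y : F y ->
  exists l, [/\ F l, forall g, l g <= (N * N)%:Z & H_equiv B F y l].
Proof.
have [m] := ubnP (\sum_g `|y g|)%N; elim: m y => // m IHm y lt_ym Fy.
have [/existsP [g lt_yg] | ] := boolP [exists g, (N * N)%:Z < y g]; last first.
  rewrite negb_exists => /forallP small.
  by exists y; split=> [//| g | x _]; [rewrite leNgt small | apply: iff_refl].
have le_yg := ltW lt_yg; set y' := y - seqZ1 g *+ N.
have y'E x : y' x = y x - (g == x)%:Z *+ N by rewrite ffunBE ffunMnE seqZ1E.
have Fy' : F y'.
  refine (inF_le Fy _) => x; rewrite y'E gerBl mulrn_wge0 // andbT.
  have [<-|_] := eqVneq g x; last by rewrite mul0rn subr0 (inF_ge0 Fy).
  by rewrite subr_ge0 (le_trans _ le_yg) // natz lez_nat leq_pmulr ?cardG_gt0.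
have [|l [Fl small_l equiv_y'l]] := IHm y' _ Fy'.
  rewrite -ltnS (leq_trans _ lt_ym) // ltnS (bigD1 g) //= [X in (_ < X)%N](bigD1 g) //=.
  have -> : (\sum_(i | i != g) `|y' i| = \sum_(i | i != g) `|y i|)%N.
    by apply: eq_bigr => i /negbTE gi; rewrite y'E eq_sym gi mul0rn subr0.
  rewrite ltn_add2r -ltz_nat !gez0_abs ?(inF_ge0 Fy) ?(inF_ge0 Fy') //.
  by rewrite y'E eqxx gtrBl natz ltz_nat cardG_gt0.
exists l; split=> // x Fx; rewrite (H_equiv_subn_card Fy le_yg Fx); exact: equiv_y'l.
Qed.

Lemma star_elt_inF y : F y -> star_elt F y.
Proof.
move=> Fy; split=> //; have [->|y_neq0] := eqVneq y 0; [by right | left].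
by move/inF_unit_eq0; apply/eqP.
Qed.

Lemma Cstar_finite_inB : Cstar_finite B F.
Proof.
pose embed (f : {ffun gT -> 'I_(N * N).+1}) : seqZ gT :=
  [ffun g => if g \in G0 then (f g : nat)%:Z else 0].
exists [seq embed f | f <- enum {ffun gT -> 'I_(N * N).+1}]; split.
  move=> _ /mapP [f _ ->]; apply: star_elt_inF => g; rewrite ffunE.
  by case: ifP => // _; rewrite eqxx.
move=> y [Fy _]; have [l [Fl small_l equiv_yl]] := H_equiv_reduced Fy.
exists l; split=> //; apply/mapP; exists [ffun g => inord `|l g|]; first by rewrite mem_enum.
apply/ffunP => g; rewrite !ffunE; case: ifPn => [_ | G0'g].
  by rewrite inordK ?gez0_abs ?(inF_ge0 Fl) // ltnS -lez_nat gez0_abs ?(inF_ge0 Fl).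
have [-> // | lg_neq0] := eqVneq (l g) 0.
by rewrite (Fl g).2 in G0'g.
Qed.

Lemma unit_inB x : B x /\ unit_in F x <-> unit_in B x.
Proof.
split=> [[_ /inF_unit_eq0 ->] | [Bx [y [By xy0]]]].
  by split; [apply: inB0 | exists 0; rewrite addr0; split=> //; apply: inB0].
by split=> //; split; [case: Bx | exists y; split=> //; case: By].
Qed.

Lemma C_monoid_inB : C_monoid B.
Proof.
apply: C_monoid_of_sub (submonoid_inB G0) (factorial_inF G0) _ unit_inB Cstar_finite_inB.
by move=> h [].
Qed.

End ClassFiniteness.

Lemma expg_absz_modzD (hT : finGroupType) (u : hT) n (a b : int) :
  (0 < n)%N -> (u ^+ n = 1)%g ->
  (u ^+ absz ((a + b) %% n)%Z = u ^+ absz (a %% n)%Z * u ^+ absz (b %% n)%Z)%g.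
Proof.
move=> n_gt0 un1; have n_neq0 : (n%:Z != 0)%R by rewrite eqz_nat -lt0n.
rewrite -expgD -(expg_mod _ un1) -[RHS](expg_mod _ un1); congr (_ ^+ _)%g.
apply/eqP; rewrite -eqz_nat -!modz_nat PoszD !gez0_abs ?modz_ge0 //.
by apply/eqP; rewrite modz_mod modzDm.
Qed.

Section Abelianization.
Variable gT : finGroupType.
Implicit Types (S T x y : seqZ gT) (t : seq gT).
Local Open Scope group_scope.
Local Notation N := #|[set: gT]|.
Local Notation G' := (derivedT gT).
Local Notation ab := (coset G').

Lemma norm_derivedT (g : gT) : g \in 'N(G').
Proof. exact: subsetP (der_norm 1 [set: gT]) g (in_setT g). Qed.

Lemma abM (a b : gT) : ab (a * b) = ab a * ab b.
Proof. by rewrite morphM ?norm_derivedT. Qed.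

Lemma ab_expN (g : gT) : ab g ^+ N = 1.
Proof. by rewrite -morphX ?norm_derivedT // expg_cardG ?inE // morph1. Qed.

Lemma commute_ab (u v : coset_of G') : commute u v.
Proof.
have := der_abelian 0 [set: gT].
have -> : ([set: gT]^`(0) / [set: gT]^`(1)) = [set: coset_of G'] by rewrite quotientT.
by move/centsP => cent_ab; apply: cent_ab; rewrite inE.
Qed.

Lemma ab_prod t : ab (\prod_(x <- t) x) = \prod_(g : gT) ab g ^+ count_mem g t.
Proof.
elim: t => [|x t IHt]; first by rewrite big_nil morph1 big1 // => g _.
rewrite big_cons abM IHt.
rewrite [RHS](eq_bigr (fun g => ab g ^+ (x == g) * ab g ^+ count_mem g t)); last first.
  by move=> g _; rewrite -expgD.
rewrite prodgM_commute; last by move=> ? ? _ _; apply: commute_ab.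
congr (_ * _); have -> : ab x = \prod_(g | g == x) ab g by rewrite big_pred1_eq.
rewrite big_mkcond.
by apply: eq_bigr => g _; rewrite [x == g]eq_sym; case: (g == x); rewrite ?expg1.
Qed.

(* Reducing the exponent mod N makes it a natural number; since [ab g ^+ N = 1]
   this does not change the value. *)
Definition Phi x : coset_of G' := \prod_(g : gT) ab g ^+ absz (x g %% N)%Z.

Lemma PhiD x y : Phi (x + y)%R = Phi x * Phi y.
Proof.
rewrite /Phi -prodgM_commute; last by move=> ? ? _ _; apply: commute_ab.
by apply: eq_bigr => g _; rewrite ffunDE expg_absz_modzD ?cardG_gt0 ?ab_expN.
Qed.

Lemma Phi0 : Phi 0%R = 1.
Proof. by apply: (mulIg (Phi 0%R)); rewrite -PhiD addr0 mul1g. Qed.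

Lemma PhiN x : Phi (- x)%R = (Phi x)^-1.
Proof. by apply: (mulgI (Phi x)); rewrite -PhiD subrr Phi0 mulgV. Qed.

Lemma PhiB x y : Phi (x - y)%R = Phi x * (Phi y)^-1.
Proof. by rewrite PhiD PhiN. Qed.

Lemma PhiMn x n : Phi (x *+ n)%R = Phi x ^+ n.
Proof. by elim: n => [|n IHn]; rewrite ?mulr0n ?Phi0 // mulrS PhiD IHn expgS. Qed.

Lemma Phi_seqZ_of t : Phi (seqZ_of t) = ab (\prod_(x <- t) x).
Proof.
rewrite ab_prod; apply: eq_bigr => g _.
by rewrite seqZ_ofE modz_nat /= (expg_mod _ (ab_expN g)).
Qed.

Lemma Phi_seqZ1 g : Phi (seqZ1 g) = ab g.
Proof. by rewrite Phi_seqZ_of big_seq1. Qed.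

Lemma Phi_pi S (a : gT) : (forall g, 0 <= S g)%R -> a \in pi_set S -> Phi S = ab a.
Proof. by move=> S_ge0 /(pi_setP _ S_ge0) [t <- <-]; apply: Phi_seqZ_of. Qed.

Lemma Phi_inB G0 S : inB G0 S -> Phi S = 1.
Proof. by move=> [FS piS]; rewrite (Phi_pi (inF_ge0 FS) piS) morph1. Qed.

Lemma Phi_qgrp G0 x : qgrp (inB G0) x -> Phi x = 1.
Proof. by move=> [a [b [Ba [Bb ->]]]]; rewrite PhiB !(Phi_inB Ba, Phi_inB Bb) mulgV. Qed.

Lemma Phi_seqZ1_repr (c : coset_of G') : Phi (seqZ1 (repr c)) = c.
Proof. by rewrite Phi_seqZ1 coset_reprK. Qed.

End Abelianization.

Section QuotientGroup.
Variables (M : zmodType) (H : M -> Prop).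
Hypothesis subH : submonoid H.
Local Open Scope ring_scope.

Lemma qgrp_sub x : H x -> qgrp H x.
Proof. by move=> Hx; exists x, 0; rewrite subr0; case: subH. Qed.

Lemma qgrpD x y : qgrp H x -> qgrp H y -> qgrp H (x + y).
Proof.
move=> [a [b [Ha [Hb ->]]]] [c [d [Hc [Hd ->]]]]; have [_ HD] := subH.
by exists (a + c), (b + d); rewrite opprD addrACA; split; [|split]; try apply: HD.
Qed.

Lemma qgrpN x : qgrp H x -> qgrp H (- x).
Proof. by move=> [a [b [Ha [Hb ->]]]]; exists b, a; rewrite opprB. Qed.

Lemma qgrp_cic x : qgrp (cic H) x <-> qgrp H x.
Proof.
split=> [[a [b [[qa _] [[qb _] ->]]]] | [a [b [Ha [Hb ->]]]]].
  by apply: qgrpD qa (qgrpN qb).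
have cicH c : H c -> cic H c.
  move=> Hc; split; first exact: qgrp_sub.
  exists 0; split=> [|n]; first by case: subH.
  have [H0 HD] := subH.
  by rewrite add0r; elim: n => [|n IHn]; rewrite ?mulr0n ?mulrS //; apply: HD.
by exists a, b; split; [|split]; try apply: cicH.
Qed.

End QuotientGroup.

Lemma is_gcd_in_inF_disjoint (gT : finGroupType) (G0 : {set gT}) (a u w : seqZ gT) :
  inF G0 a -> inF G0 u -> inF G0 w -> (forall g, u g = 0 \/ w g = 0)%R ->
  is_gcd_in (inF G0) a [:: a + u; a + w]%R.
Proof.
move=> Fa Fu Fw disj_uw; split=> //; split.
  by move=> x; rewrite !inE => /orP [] /eqP ->; [exists u | exists w].
move=> b Fb dvd_b; have [c1 [Fc1 Eu]] := dvd_b _ (mem_head _ _).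
have [c2 [Fc2 Ew]] := dvd_b (a + w)%R (mem_last _ [:: a + w]%R).
exists (a - b)%R; split; last by rewrite addrC subrK.
refine (inF_le Fa _) => g; rewrite ffunBE gerBl (inF_ge0 Fb) andbT subr_ge0.
move/ffunP: Eu => /(_ g); move/ffunP: Ew => /(_ g); rewrite !ffunDE.
have := inF_ge0 Fc1 g; have := inF_ge0 Fc2 g.
case: (disj_uw g) => ->; rewrite addr0;
  by move: (a g : int) (b g : int) (c1 g : int) (c2 g : int); lia.
Qed.

Section ClassGroup.
Variable gT : finGroupType.
Implicit Types (S T U x y : seqZ gT).
Local Open Scope ring_scope.
Local Notation N := #|[set: gT]|.
Local Notation G' := (derivedT gT).
Local Notation B := (inB [set: gT]).
Local Notation F := (inF [set: gT]).

Lemma inFT S : F S <-> forall g, 0 <= S g.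
Proof. by split=> [/inF_ge0 // | S_ge0 g]; rewrite inE. Qed.

Lemma inF_seqZ_of t : F (seqZ_of t).
Proof. by apply/inFT => g; apply: seqZ_of_ge0. Qed.

(* [~ a, b] is a product of an ordering of [a^-1 b^-1 a b], another ordering
   of which has product 1. *)
Lemma commg_pi_inB (a b : gT) : exists2 T, B T & [~ a, b]%g \in pi_set T.
Proof.
exists (seqZ_of [:: a^-1; b^-1; a; b]%g); last first.
  have := mem_pi_set [:: a^-1; b^-1; a; b]%g; rewrite !big_cons big_nil mulg1 !mulgA.
  by rewrite commgEl conjgE !mulgA.
have -> : seqZ_of [:: a^-1; b^-1; a; b]%g = seqZ_of [:: a^-1; a; b^-1; b]%g.
  apply/eqP; rewrite -perm_seqZ_of perm_cons.
  by rewrite -[[:: b^-1, a & _]%g]/([:: b^-1] ++ [:: a] ++ [:: b])%g perm_catCA.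
by apply: inB_seqZ_of (inF_seqZ_of _) _; rewrite !big_cons big_nil mulg1 mulKg mulVg.
Qed.

Lemma derived_pi_inB (z : gT) : z \in G' -> exists2 T, B T & z \in pi_set T.
Proof.
move/gen_prodgP => [n [c c_comm ->]]; elim: n c c_comm => [|n IHn] c c_comm.
  by exists 0; [apply: inB0 | rewrite big_ord0 mem_pi_set0].
rewrite big_ord_recr /=.
have [T BT piT] := IHn (fun i => c (widen_ord (leqnSn n) i)) (fun i => c_comm _).
have /imset2P [a b _ _ ->] := c_comm ord_max.
have [T' BT' piT'] := commg_pi_inB a b.
by exists (T + T'); [apply: inBD | apply: mem_pi_setD (inF_ge0 BT.1) (inF_ge0 BT'.1) piT piT'].
Qed.

Lemma inB_pi_subset (s : seq gT) : {subset s <= G'} -> exists2 U, B U & {subset s <= pi_set U}.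
Proof.
elim: s => [|a s IHs] sG'; first by exists 0; [apply: inB0 |].
have [T BT piTa] := derived_pi_inB (sG' a (mem_head a s)).
have [U BU piU] : exists2 U, B U & {subset s <= pi_set U}.
  by apply: IHs => b sb; apply: sG'; rewrite inE sb orbT.
have [T_ge0 U_ge0] := (inF_ge0 BT.1, inF_ge0 BU.1).
exists (T + U) => [|b]; first exact: inBD.
rewrite inE => /predU1P [-> | sb].
  by rewrite -[a]mulg1 (mem_pi_setD T_ge0 U_ge0 piTa BU.2).
by rewrite -[b]mul1g (mem_pi_setD T_ge0 U_ge0 BT.2 (piU b sb)).
Qed.

(* If [h] is an ordered product of [S] then [h \in G'], and [h^-1] is an
   ordered product of [U]. *)
Lemma inB_absorbs_ker_Phi : exists2 U, B U & forall S, F S -> Phi S = 1%g -> B (U + S).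
Proof.
have /inB_pi_subset [U BU piU] : {subset enum G' <= G'} by move=> a; rewrite mem_enum.
exists U => // S FS PhiS1; split; first exact: inFD BU.1 FS.
have [h pih] := exists_mem_pi_set (inF_ge0 FS).
have G'h : h \in G' by apply: coset_idr (norm_derivedT h) _; rewrite -(Phi_pi (inF_ge0 FS) pih).
have piUh : h^-1%g \in pi_set U by apply: piU; rewrite mem_enum groupV.
by rewrite -(mulVg h) (mem_pi_setD (inF_ge0 BU.1) (inF_ge0 FS) piUh pih).
Qed.

Lemma qgrp_inB_sub_inF x : exists S, F S /\ qgrp B (x - S).
Proof.
pose nx : seqZ gT := [ffun g => `|x g|].
have Fnx : F nx by apply/inFT => g; rewrite ffunE.
exists (x + nx *+ N); split.
  apply/inFT => g; rewrite ffunDE ffunMnE ffunE -mulr_natr natz.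
  have N_gt0 : (0 < N)%N := cardG_gt0 [set: gT].
  by move: (x g : int) N_gt0; nia.
exists 0, (nx *+ N); split; first exact: inB0.
by split; [apply: inB_mulrn_card | rewrite opprD addrA subrr].
Qed.

Lemma qgrp_inBP x : qgrp B x <-> Phi x = 1%g.
Proof.
split; first exact: Phi_qgrp.
move=> Phix1; have [S [FS qxS]] := qgrp_inB_sub_inF x.
have PhiS1 : Phi S = 1%g by move: Phix1; rewrite -(subrK S x) PhiD (Phi_qgrp qxS) mul1g.
have [U BU absU] := inB_absorbs_ker_Phi.
rewrite -(subrK S x); apply: qgrpD qxS _; first exact: submonoid_inB.
have -> : S = U + S - U by rewrite [U + S]addrC addrK.
by exists (U + S), U; split; [apply: absU | split].
Qed.

Lemma cic_inBP S : cic B S <-> F S /\ Phi S = 1%g.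
Proof.
split=> [[qS [c [Bc Bcn]]] | [FS PhiS1]].
  split; last exact: Phi_qgrp qS.
  apply/inFT => g; rewrite leNgt; apply/negP => Sg_lt0.
  have := inF_ge0 (Bcn `|c g|%N.+1).1 g; rewrite ffunDE ffunMnE -mulr_natr natz.
  by move: (c g : int) (S g : int) Sg_lt0; nia.
split; first exact/qgrp_inBP.
have [U BU absU] := inB_absorbs_ker_Phi.
by exists U; split=> // n; apply: absU; [apply: inFMn | rewrite PhiMn PhiS1 expg1n].
Qed.

Lemma exists_neq2 (u v : gT) : (3 <= N)%N -> exists a, a != u /\ a != v.
Proof.
move=> N_ge3; have [a /andP [au av] | uv_only] := pickP (fun a => (a != u) && (a != v)).
  by exists a.
have /subset_leq_card : [set: gT] \subset [set u; v].
  by apply/subsetP => a _; rewrite !inE; move/negbT: (uv_only a); rewrite negb_and !negbK.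
by rewrite cards2 => /(leq_trans N_ge3); case: (u != v).
Qed.

Lemma inB_valuation (g : gT) (z : int) : (3 <= N)%N -> (exists S, B S /\ S g = z) <-> 0 <= z.
Proof.
move=> N_ge3; split=> [[S [[FS _] <-]] | z_ge0]; first exact: inF_ge0 FS g.
pose a := (g ^+ absz z)%g; have [b [bg bga]] := exists_neq2 g (g * a)^-1%g N_ge3.
pose c := (b^-1 * a^-1)%g.
have cg : c != g by apply: contra bga => /eqP <-; rewrite /c mulgKV invgK.
exists (seqZ_of (nseq (absz z) g ++ [:: b; c])); split.
  apply: inB_seqZ_of (inF_seqZ_of _) _.
  by rewrite big_cat big_nseq iter_mulg_1 !big_cons big_nil /= mulg1 /c mulKVg mulgV.
rewrite seqZ_ofE count_cat count_nseq /= eqxx mul1n (negbTE bg) (negbTE cg) /=.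
by rewrite !addn0 gez0_abs.
Qed.

Lemma divisor_theory_cic_inB : (3 <= N)%N -> incl_divisor_theory (cic B) F.
Proof.
move=> N_ge3; split; first by move=> a /cic_inBP [].
split=> [a b /cic_inBP [Fa Phia] /cic_inBP [Fb Phib] [d [Fd Ebd]] | al Fal].
  exists d; split=> //; apply/cic_inBP; split=> //.
  by move: Phib; rewrite Ebd PhiD Phia mul1g.
have [h pih] := exists_mem_pi_set (inF_ge0 Fal); have PhiE := Phi_pi (inF_ge0 Fal) pih.
have [a [a1 ah]] := exists_neq2 1%g h^-1%g N_ge3.
have ha : ((h * a)^-1 != h^-1)%g.
  by rewrite (inj_eq invg_inj) -{2}[h]mulg1 (inj_eq (mulgI h)).
pose u := seqZ1 h^-1%g; pose w := seqZ1 a + seqZ1 (h * a)^-1%g.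
have [Fu Fw] : F u /\ F w by split; [|apply: inFD]; apply: inF_seqZ1; rewrite inE.
exists [:: al + u; al + w]; split=> //; split.
  move=> x; rewrite !inE => /orP [] /eqP ->; apply/cic_inBP; split; try exact: inFD.
    by rewrite PhiD PhiE Phi_seqZ1 -abM mulgV morph1.
  by rewrite !PhiD PhiE !Phi_seqZ1 mulgA -!abM mulgV morph1.
apply: is_gcd_in_inF_disjoint => // g; rewrite /u /w ffunDE !seqZ1E.
have [<- | _] := eqVneq h^-1%g g; [right | by left].
by rewrite (negbTE ah) (negbTE ha).
Qed.

Lemma Phi_H_equiv y y' : F y -> F y' -> H_equiv B F y y' -> Phi y = Phi y'.
Proof.
move=> Fy Fy' equiv_yy'; have Fx : F (y *+ N.-1) := inFMn _ Fy.
have Byx : B (y + y *+ N.-1) by rewrite -mulrS prednK ?cardG_gt0 //; apply: inB_mulrn_card.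
apply: (@mulIg _ (Phi (y *+ N.-1))).
by rewrite -!PhiD (Phi_inB Byx) (Phi_inB ((equiv_yy' _ Fx).1 Byx)).
Qed.

End ClassGroup.

Theorem proposition3p5 (gT : finGroupType) (hG : 3 <= #|[set: gT]|) :
  (* (1) *)
  (forall G0 : {set gT},
     (forall A : seqZ gT, inF G0 A ->
        exists S, inB G0 S /\ dvd_in (inF G0) A S) /\
     C_monoid (inB G0)) /\
  (* (2) *)
  ((forall (g : gT) (z : int),
      (exists S, inB [set: gT] S /\ S g = z) <-> (0 <= z)%R) /\
   incl_divisor_theory (cic (inB [set: gT])) (inF [set: gT]) /\
   (forall x : seqZ gT,
      qgrp (cic (inB [set: gT])) x <-> qgrp (inB [set: gT]) x) /\
   (forall x : seqZ gT, exists S, inF [set: gT] S /\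
      qgrp (inB [set: gT]) (x - S)%R) /\
   (exists Phi : seqZ gT -> coset_of (derivedT gT),
      (forall S g, inF [set: gT] S -> g \in pi_set S -> Phi S = coset (derivedT gT) g) /\
      (forall x y, qgrp (inB [set: gT]) (x - y)%R -> Phi x = Phi y) /\
      (forall x y, Phi (x + y)%R = (Phi x * Phi y)%g) /\
      (forall x, Phi x = 1%g -> qgrp (inB [set: gT]) x) /\
      (forall c, exists x, Phi x = c))) /\
  (* (3) *)
  (exists Psi : seqZ gT -> coset_of (derivedT gT),
     (forall y y', inF [set: gT] y -> inF [set: gT] y' ->
        H_equiv (inB [set: gT]) (inF [set: gT]) y y' -> Psi y = Psi y') /\
     (forall y y', inF [set: gT] y -> inF [set: gT] y' ->
        Psi (y + y')%R = (Psi y * Psi y')%g) /\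
     (forall c, exists y, inF [set: gT] y /\ Psi y = c)).
Proof.
split.
  by move=> G0; split; [move=> A; apply: inB_cofinal | apply: C_monoid_inB].
split.
  split; first by move=> g z; apply: inB_valuation.
  split; first exact: divisor_theory_cic_inB.
  split; first by move=> x; apply: qgrp_cic; apply: submonoid_inB.
  split; first exact: qgrp_inB_sub_inF.
  exists (@Phi gT); split; first by move=> S g FS; apply: Phi_pi (inF_ge0 FS).
  split.
    move=> x y /qgrp_inBP; rewrite PhiB => Phixy1.
    by rewrite -(mulgKV (Phi y) (Phi x)) Phixy1 mul1g.
  split; first exact: PhiD.
  split; first by move=> x /qgrp_inBP.
  by move=> c; exists (seqZ1 (repr c)); apply: Phi_seqZ1_repr.
exists (@Phi gT); split; first exact: Phi_H_equiv.
split; first by move=> y y' _ _; apply: PhiD.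
move=> c; exists (seqZ1 (repr c)); split; last exact: Phi_seqZ1_repr.
by apply: inF_seqZ1; rewrite inE.
Qed.
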